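(* If $f:[a,b]\to\mathbb F$ is $g$-continuous at $t\in[a,b]$, then the function $f^*:[a,b]\to\mathbb F$, $f^*(s)=f(s^* )$, is also $g$-continuous at $t$.
   Context: Let $g:\mathbb R\to\mathbb R$ be nondecreasing and left-continuous, $\mathbb F\in\{\mathbb R,\mathbb C\}$. $\Delta g(t)=g(t^+)-g(t)$, $D_g=\{t:\Delta g(t)>0\}$, $C_g=\{t: g\text{ constant on }(t-\varepsilon,t+\varepsilon)\text{ for some }\varepsilon>0\}=\bigcup_{n\in\Lambda}(a_n,b_n)$ (disjoint union of connected components), $N_g^-=\{a_n\}\setminus D_g$, $N_g^+=\{b_n\}\setminus D_g$. Fix $a<b$ with $a\notin N_g^-\cup D_g$, $b\notin D_g\cup C_g\cup N_g^+$. For $s\in[a,b]$, $s^*=s$ if $s\notin C_g$ and $s^*=b_n$ if $s\in(a_n,b_n)$. A function $u:D\subset\mathbb R\to\mathbb F$ is $g$-continuous at $t\in D$ if for every $\varepsilon>0$ there is $\delta>0$ with $|u(t)-u(s)|<\varepsilon$ for all $s\in D$ with $|g(t)-g(s)|<\delta$. *)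

From HB Require Import structures.
From mathcomp Require Import all_boot all_order all_algebra.
From mathcomp Require Import all_classical all_reals all_analysis.
Set Implicit Arguments. Unset Strict Implicit. Unset Printing Implicit Defensive.
Import Order.TTheory GRing.Theory Num.Theory.
Import numFieldNormedType.Exports.
Local Open Scope classical_set_scope.
Local Open Scope ring_scope.

Section Defs.
Variable R : realType.
Implicit Types (g : R -> R) (t s x y : R).

Definition nondecr g := forall x y, x <= y -> g x <= g y.
Definition left_cont g := forall t, (g x @[x --> t^'-]) --> (g t : R^o).

Definition Deltag g t : R := lim (g x @[x --> t^'+]) - g t.

Definition Dg g t : Prop := 0 < Deltag g t.

Definition Cg g t : Prop :=
  exists2 e : R, 0 < e & forall x y, `|x - t| < e -> `|y - t| < e -> g x = g y.

(* left / right endpoints of the connected components (a_n,b_n) of the open set C_g *)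
Definition Cg_left_end g x : Prop :=
  ~ Cg g x /\ exists2 e : R, 0 < e & forall y, x < y < x + e -> Cg g y.
Definition Cg_right_end g x : Prop :=
  ~ Cg g x /\ exists2 e : R, 0 < e & forall y, x - e < y < x -> Cg g y.

Definition Ngminus g x : Prop := Cg_left_end g x /\ ~ Dg g x.
Definition Ngplus g x : Prop := Cg_right_end g x /\ ~ Dg g x.

(* s^* : s if s \notin C_g, and b_n (right end of the component of C_g
   containing s) if s \in (a_n,b_n). *)
Definition gstar g s : R :=
  if pselect (Cg g s)
  then sup [set r : R | forall x, s <= x <= r -> Cg g x]
  else s.

Definition g_continuous_at (F : numFieldType) g (D : set R) (u : R -> F) t : Prop :=
  forall eps : F, 0 < eps -> exists2 delta : R, 0 < delta &
    forall s, D s -> `|g t - g s| < delta -> `|u t - u s| < eps.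

End Defs.

From HB Require Import structures.
From mathcomp Require Import all_boot all_order all_algebra.
From mathcomp Require Import all_classical all_reals all_analysis.
Import Order.TTheory GRing.Theory Num.Theory.
Import numFieldNormedType.Exports.
Set Implicit Arguments. Unset Strict Implicit. Unset Printing Implicit Defensive.
Local Open Scope classical_set_scope.
Local Open Scope ring_scope.

(** For [s] in [C_g] the point [s^*] is the supremum of the run of [C_g]
    starting at [s]; since [b] is not in [C_g] this run is bounded by [b], so
    [s^*] stays in [[a, b]].  On that run [g] is locally constant, hence
    constant (mean value theorem), and left continuity carries the value
    [g s] to the endpoint: [g (gstar g s) = g s].
    A [g]-continuous [f] takes equal values at points with equal [g]-value,
    so composing it with [gstar g] preserves [g]-continuity. *)

Section Cg_constant.
Variables (R : realType) (g : R -> R).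

Lemma Cg_near_cst (y : R) : Cg g y -> \forall x \near y, g x = g y.
Proof.
move=> [e e0 ge]; near=> x; apply: ge; last by rewrite subrr normr0.
by rewrite distrC; near: x; exists e.
Unshelve. all: by end_near. Qed.

Lemma Cg_is_derive (y : R) : Cg g y -> is_derive y 1 g 0.
Proof.
move=> /Cg_near_cst gy; apply: (@near_eq_is_derive _ _ _ (cst (g y))).
by apply: filterS gy => x ->.
Qed.

Lemma Cg_itv_cst (s x : R) :
  s <= x -> (forall y, y \in `[s, x] -> Cg g y) -> g x = g s.
Proof.
move=> sx Cgsx.
have g'0 y : y \in `]s, x[ -> is_derive y 1 g 0.
  by move=> ysx; apply/Cg_is_derive/Cgsx; apply: subset_itv_oo_cc.
have gcont : {within `[s, x], continuous g}.
  apply: continuous_in_subspaceT => y /set_mem/Cgsx/Cg_near_cst.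
  exact: near_cst_continuous.
have [c _ /eqP] := MVT_segment sx g'0 gcont.
by rewrite mul0r subr_eq0 => /eqP.
Qed.

End Cg_constant.

Definition Cg_reach (R : realType) (g : R -> R) (s : R) : set R :=
  [set r | forall x, s <= x <= r -> Cg g x].

Section gstar.
Variables (R : realType) (g : R -> R) (b s : R).
Hypotheses (Cb : ~ Cg g b) (sb : s <= b).

Lemma gstarE : Cg g s -> gstar g s = sup (Cg_reach g s).
Proof. by rewrite /gstar; case: pselect. Qed.

Lemma gstarNE : ~ Cg g s -> gstar g s = s.
Proof. by rewrite /gstar; case: pselect. Qed.

Lemma Cg_reach_refl : Cg g s -> Cg_reach g s s.
Proof. by move=> Cs x /andP[sx xs]; rewrite (@le_anti _ _ x s) ?sx ?xs. Qed.

Lemma Cg_reach_ub : ubound (Cg_reach g s) b.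
Proof.
move=> r reach_r; rewrite leNgt; apply/negP => br.
by apply: Cb; apply: reach_r; rewrite sb ltW.
Qed.

Lemma has_sup_Cg_reach : Cg g s -> has_sup (Cg_reach g s).
Proof.
move=> Cs; split; first by exists s; exact: Cg_reach_refl.
by exists b; exact: Cg_reach_ub.
Qed.

Lemma le_gstar : s <= gstar g s.
Proof.
have [Cs|NCs] := pselect (Cg g s); last by rewrite gstarNE.
rewrite gstarE //; apply: sup_upper_bound; first exact: has_sup_Cg_reach.
exact: Cg_reach_refl.
Qed.

Lemma gstar_le : gstar g s <= b.
Proof.
have [Cs|NCs] := pselect (Cg g s); last by rewrite gstarNE.
by rewrite gstarE //; apply: ge_sup; [case: (has_sup_Cg_reach Cs)|exact: Cg_reach_ub].
Qed.

Lemma Cg_before_gstar y : s <= y < gstar g s -> Cg g y.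
Proof.
move=> /andP[sy].
have [Cs|NCs] := pselect (Cg g s); last by rewrite gstarNE // ltNge sy.
rewrite gstarE // -subr_gt0 => ym.
have [r reach_r yr] := sup_adherent ym (has_sup_Cg_reach Cs).
by apply: reach_r; rewrite sy ltW //; move: yr; rewrite opprB addrC subrK.
Qed.

Lemma g_gstar : left_cont g -> g (gstar g s) = g s.
Proof.
move=> gl; have := le_gstar; rewrite le_eqVlt => /orP[/eqP <- //|s_lt].
have near_run : \forall x \near (gstar g s)^'-, s <= x < gstar g s.
  near=> x; apply/andP; split; near: x; [exact: nbhs_left_ge | exact: nbhs_left_lt].
have gs_left : g x @[x --> (gstar g s)^'-] --> g s.
  apply: cvg_near_cst; apply: filterS near_run => x /andP[sx xm].
  apply: Cg_itv_cst => // y /[!in_itv] /= /andP[sy yx].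
  by apply: Cg_before_gstar; rewrite sy (le_lt_trans yx).
exact: (cvg_unique _ (gl _) gs_left).
Unshelve. all: by end_near. Qed.

End gstar.

Lemma gstar_in_itv (R : realType) (g : R -> R) (a b s : R) :
  ~ Cg g b -> s \in `[a, b] -> gstar g s \in `[a, b].
Proof.
move=> Cb /[!in_itv] /= /andP[as_ sb].
by rewrite (le_trans as_ (le_gstar Cb sb)) (gstar_le Cb sb).
Qed.

Section g_continuity.
Variables (R : realType) (F : numFieldType) (g : R -> R) (D : set R).

Lemma g_continuous_at_eq (u : R -> F) t s :
  g_continuous_at g D u t -> D s -> g s = g t -> u s = u t.
Proof.
move=> ut Ds gst; apply/eqP; apply: contraT => neq.
have dist_gt0 : 0 < `|u t - u s| by rewrite normr_gt0 subr_eq0 eq_sym.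
have [d d0 /(_ s Ds)] := ut _ dist_gt0.
by rewrite gst subrr normr0 => /(_ d0); rewrite ltxx.
Qed.

Lemma g_continuous_at_comp (u : R -> F) (phi : R -> R) t :
  (forall s, D s -> D (phi s)) -> (forall s, D s -> g (phi s) = g s) -> D t ->
  g_continuous_at g D u t -> g_continuous_at g D (fun s => u (phi s)) t.
Proof.
move=> Dphi gphi Dt ut eps eps0; have [d d0 ud] := ut eps eps0.
exists d => // s Ds gts; rewrite (g_continuous_at_eq ut (Dphi t Dt) (gphi t Dt)).
by apply: ud; [exact: Dphi | rewrite gphi].
Qed.

End g_continuity.

Theorem proposition5p1 (R : realType) (F : numFieldType) (g : R -> R) (a b : R)
  (hg_mono : nondecr g) (hg_left : left_cont g) (hab : a < b)
  (ha : ~ (Ngminus g a \/ Dg g a))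
  (hb : ~ (Dg g b \/ Cg g b \/ Ngplus g b))
  (f : R -> F) (t : R) (ht : t \in `[a, b]) :
  g_continuous_at g `[a, b] f t ->
  g_continuous_at g `[a, b] (fun s => f (gstar g s)) t.
Proof.
have Cb : ~ Cg g b by move=> Cb; apply: hb; right; left.
apply: g_continuous_at_comp => // s sab; first exact: gstar_in_itv.
have /[!in_itv] /andP[_ sb] : s \in `[a, b] := sab.
exact: (g_gstar Cb sb hg_left).
Qed.
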